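(* Let $n\ge1$, $\gamma>0$, and let $g_i,f_j:[0,1]\to[0,\infty)$, $i,j=1,\dots,n$, be $\mathcal C^1$ functions. Consider the system $$\dot{x}_i = -x_i g_i(x_i)\sum_{j=1}^n f_j(y_j)y_j,\qquad \dot{y}_i = x_i g_i(x_i)\sum_{j=1}^n f_j(y_j)y_j-\gamma y_i,\qquad i=1,\dots,n,$$ with initial condition $(x(0),y(0))\in\mathcal S=\{(x,y)\in[0,1]^{2n}:x+y\le\mathbf 1\}$ satisfying $\mathbf 0\lneq x(0)\le\mathbf 1-y(0)\lneq\mathbf 1$. Assume that $g(x)>\mathbf 0$ and $f(y)>\mathbf 0$ for all $(x,y)\in\mathcal S$, that $x_i\mapsto x_ig_i(x_i)$ is increasing for every $i$, and that $y_j\mapsto f_j(y_j)y_j$ is increasing and concave for every $j$. Let $\bar y(t)=\sum_{j=1}^n f_j(y_j(t))\,y_j(t)$. Then: (i) if $\dot{\bar y}(0)\le 0$, then $\bar y(t)$ is strictly decreasing for $t\ge0$; (ii) if $\dot{\bar y}(0)>0$, then there exists $\hat t>0$ such that $\bar y(t)$ is strictly increasing on $[0,\hat t]$ and strictly decreasing on $[\hat t,+\infty)$.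
   Context: Vector inequalities are entrywise: $u\le v$ means $u_i\le v_i$ for all $i$, $u<v$ means $u_i<v_i$ for all $i$, and $u\lneq v$ means $u\le v$ with $u_j<v_j$ for some $j$. $g(x)$ denotes the vector $(g_1(x_1),\dots,g_n(x_n))$ and $f(y)$ the vector $(f_1(y_1),\dots,f_n(y_n))$. The system is the network SIR model with rank-one interaction matrix $A_{ij}(x,y)=g_i(x_i)f_j(y_j)$. *)

From HB Require Import structures.
From mathcomp Require Import all_boot all_order all_algebra.
From mathcomp Require Import all_classical all_reals all_analysis.
Set Implicit Arguments. Unset Strict Implicit. Unset Printing Implicit Defensive.
Import Order.TTheory GRing.Theory Num.Theory.
Import numFieldNormedType.Exports.
Local Open Scope classical_set_scope.
Local Open Scope ring_scope.

(* At interior points this is the usual derivative; at an endpoint of an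
   interval it is the one-sided derivative. *)
Definition deriv_within {R : realType} (A : set R) (u : R -> R) (t d : R) : Prop :=
  (fun h : R => (u (t + h) - u t) / h) @ within (fun h : R => A (t + h)) (0 : R)^'
    --> d.

Definition I01 {R : realType} : set R := [set z | 0 <= z <= 1].
Definition Rplus_half {R : realType} : set R := [set z | 0 <= z].

Definition C1_on01 {R : realType} (u : R -> R) : Prop :=
  exists du : R -> R, {within I01, continuous du} /\
    forall z, I01 z -> deriv_within I01 u z (du z).

Definition inS {R : realType} (n : nat) (x y : 'I_n -> R) : Prop :=
  forall i, [/\ 0 <= x i <= 1, 0 <= y i <= 1 & x i + y i <= 1].

Definition vle {R : realType} (n : nat) (u v : 'I_n -> R) : Prop :=
  forall i, u i <= v i.
Definition vlne {R : realType} (n : nat) (u v : 'I_n -> R) : Prop :=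
  vle u v /\ exists j, u j < v j.

Definition strictly_incr_on01 {R : realType} (h : R -> R) : Prop :=
  forall a b, I01 a -> I01 b -> a < b -> h a < h b.
Definition concave_on01 {R : realType} (h : R -> R) : Prop :=
  forall a b l, I01 a -> I01 b -> 0 <= l <= 1 ->
    l * h a + (1 - l) * h b <= h (l * a + (1 - l) * b).

Definition ybar {R : realType} (n : nat) (f : 'I_n -> R -> R)
  (y : 'I_n -> R -> R) (t : R) : R :=
  \sum_(j < n) f j (y j t) * y j t.

From HB Require Import structures.
From mathcomp Require Import all_boot all_order all_algebra.
From mathcomp Require Import all_classical all_reals all_analysis.
From mathcomp Require Import ring lra.
Import Order.TTheory GRing.Theory Num.Theory.
Import numFieldNormedType.Exports.
Local Open Scope classical_set_scope.
Local Open Scope ring_scope.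

(* Write ybar = Y = sum_j h_j(y_j) with h_j(z) = f_j(z) z, so that
   Y' = dY = sum_j h_j'(y_j) y_j'.  As h_j is only C^1, Y'' need not exist, and
   one bounds the upper right Dini derivative of dY instead: concavity of h_j
   gives, for s > tau close to tau,
     dY(s) - dY(tau) <= dY(tau) (P(tau) - gamma) (s - tau)
                        + Y(tau) sum_j h_j'(y_j(s)) (k_j(s) - k_j(tau)) + o(s - tau),
   with P = sum_j h_j'(y_j) k_j and k_j = x_j g_j(x_j) nonincreasing.  Comparing
   with dY(s) e^{-P_max s} shows that dY <= 0 persists once reached; comparing
   with dY(s) e^{gamma s} shows that dY cannot come back to 0 afterwards, for
   then k_{i0} would be nondecreasing although x_{i0} > 0 strictly decreases.
   dY cannot stay positive forever either: sum_j h_j'(0) (x_j + y_j) >= 0 would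
   then decrease at rate at least gamma Y(0) > 0.  Hence Y increases up to the
   first zero of dY and strictly decreases afterwards. *)

(** * Little-o estimates along a filter *)

Definition small_o {R : realType} (F : set_system R) (t : R) (phi : R -> R) :=
  forall e, 0 < e -> \forall s \near F, `|phi s| <= e * `|s - t|.

Definition small_o_ub {R : realType} (F : set_system R) (t : R) (phi : R -> R) :=
  forall e, 0 < e -> \forall s \near F, phi s <= e * `|s - t|.

Section small_o.
Context {R : realType} {F : set_system R} {FF : Filter F} {t : R}.
Implicit Types (phi psi : R -> R) (c : R).
Local Notation small_o := (small_o F t).
Local Notation small_o_ub := (small_o_ub F t).

Lemma small_o_scaled k {phi} : 0 < k ->
  (forall e, 0 < e -> \forall s \near F, `|phi s| <= k * e * `|s - t|) ->
  small_o phi.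
Proof.
move=> k0 H e e0; apply: filterS (H (e / k) (divr_gt0 e0 k0)) => s.
by rewrite [k * _]mulrC divfK ?gt_eqF.
Qed.

Lemma small_o_ub_scaled k {phi} : 0 < k ->
  (forall e, 0 < e -> \forall s \near F, phi s <= k * e * `|s - t|) ->
  small_o_ub phi.
Proof.
move=> k0 H e e0; apply: filterS (H (e / k) (divr_gt0 e0 k0)) => s.
by rewrite [k * _]mulrC divfK ?gt_eqF.
Qed.

Lemma eq_small_o {phi psi} : small_o phi -> phi =1 psi -> small_o psi.
Proof. by move=> + /funext<-. Qed.

Lemma small_o0 : small_o (fun=> 0).
Proof. by move=> e /ltW e0; apply: nearW => s; rewrite normr0 mulr_ge0. Qed.

Lemma small_oD {phi psi} :
  small_o phi -> small_o psi -> small_o (fun s => phi s + psi s).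
Proof.
move=> Hphi Hpsi; apply: (small_o_scaled 2) => // e e0.
apply: filterS2 (Hphi e e0) (Hpsi e e0) => s h1 h2.
have := ler_normD (phi s) (psi s); lra.
Qed.

Lemma small_o_sum {I : Type} (r : seq I) {phi : I -> R -> R} :
  (forall i, small_o (phi i)) -> small_o (fun s => \sum_(i <- r) phi i s).
Proof.
move=> Hphi; elim: r => [|i r IHr].
  by under eq_fun do rewrite big_nil; exact: small_o0.
by under eq_fun do rewrite big_cons; exact: small_oD.
Qed.

Lemma small_o_bounded_mul {C psi phi} : (\forall s \near F, `|psi s| <= C) ->
  small_o phi -> small_o (fun s => psi s * phi s).
Proof.
move=> Hpsi Hphi; apply: (small_o_scaled (`|C| + 1)) => [|e e0].
  by rewrite ltr_wpDl.
apply: filterS2 Hpsi (Hphi e e0) => s h1 h2; rewrite normrM -mulrA.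
apply: ler_pM => //; first by rewrite (le_trans h1) // (le_trans (ler_norm C)) // lerDl.
Qed.

Lemma small_oZ c {phi} : small_o phi -> small_o (fun s => c * phi s).
Proof. by apply: (@small_o_bounded_mul `|c|); apply: nearW. Qed.

Lemma small_o_vanishing_mul {C psi phi} : psi @ F --> 0 ->
  (\forall s \near F, `|phi s| <= C * `|s - t|) ->
  small_o (fun s => psi s * phi s).
Proof.
move=> Hpsi Hphi; apply: (small_o_scaled (`|C| + 1)) => [|e e0].
  by rewrite ltr_wpDl.
have Hpsi' : \forall s \near F, `|psi s| <= e by exact: cvgr0_norm_le.
apply: filterS2 Hpsi' Hphi => s h1 h2; rewrite normrM.
have C1 : C * `|s - t| <= (`|C| + 1) * `|s - t|.
  by rewrite ler_wpM2r // (le_trans (ler_norm C)) // lerDl.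
rewrite -mulrA mulrCA; apply: ler_pM => //; exact: le_trans h2 C1.
Qed.

Lemma small_o_ubW {phi} : small_o phi -> small_o_ub phi.
Proof. by move=> H e e0; apply: filterS (H e e0) => s; apply: le_trans (ler_norm _). Qed.

Lemma small_o_ubD {phi psi} :
  small_o_ub phi -> small_o_ub psi -> small_o_ub (fun s => phi s + psi s).
Proof.
move=> Hphi Hpsi; apply: (small_o_ub_scaled 2) => // e e0.
by apply: filterS2 (Hphi e e0) (Hpsi e e0) => s h1 h2; lra.
Qed.

Lemma small_o_ub_sum {I : Type} (r : seq I) {phi : I -> R -> R} :
  (forall i, small_o_ub (phi i)) -> small_o_ub (fun s => \sum_(i <- r) phi i s).
Proof.
move=> Hphi; elim: r => [|i r IHr].
  by under eq_fun do rewrite big_nil; exact/small_o_ubW/small_o0.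
by under eq_fun do rewrite big_cons; exact: small_o_ubD.
Qed.

Lemma small_o_ub_le {phi psi} : small_o_ub psi ->
  (\forall s \near F, phi s <= psi s) -> small_o_ub phi.
Proof. by move=> H Hle e e0; apply: filterS2 Hle (H e e0) => s; apply: le_trans. Qed.

Lemma small_o_ub_bounded_mul {C psi phi} : (\forall s \near F, 0 <= psi s <= C) ->
  small_o_ub phi -> small_o_ub (fun s => psi s * phi s).
Proof.
move=> Hpsi Hphi; apply: (small_o_ub_scaled (`|C| + 1)) => [|e e0].
  by rewrite ltr_wpDl.
apply: filterS2 Hpsi (Hphi e e0) => s /andP[h0 h1] h2.
have eN : 0 <= e * `|s - t| := mulr_ge0 (ltW e0) (normr_ge0 _).
rewrite -mulrA (le_trans (ler_wpM2l h0 h2)) // ler_wpM2r //.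
by rewrite (le_trans h1) // (le_trans (ler_norm C)) ?lerDl.
Qed.

End small_o.

Lemma small_o_comp {R : realType} {F G : set_system R} {FF : Filter F} {t z K : R}
    {u phi : R -> R} :
  u @ F --> G -> (\forall s \near F, `|u s - z| <= K * `|s - t|) ->
  small_o G z phi -> small_o F t (fun s => phi (u s)).
Proof.
move=> uFG uK Hphi; apply: (small_o_scaled (`|K| + 1)) => [|e e0].
  by rewrite ltr_wpDl.
have phiu : \forall s \near F, `|phi (u s)| <= e * `|u s - z|.
  exact: uFG (Hphi e e0).
apply: filterS2 phiu uK => s h1 h2.
rewrite (le_trans h1) // -mulrA mulrCA ler_pM2l //.
by rewrite (le_trans h2) // ler_wpM2r // (le_trans (ler_norm K)) ?lerDl.
Qed.

Lemma cvg_near_bounded {R : realType} {F : set_system R} {FF : Filter F}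
    {u : R -> R} {l : R} :
  u @ F --> l -> \forall s \near F, `|u s| <= `|l| + 1.
Proof.
move=> /cvgr_dist_le /(_ 1 ltr01); apply: filterS => s.
by have := ler_normB l (l - u s); rewrite opprB addrCA subrr addr0; lra.
Qed.

Lemma small_o_filter_le {R : realType} {F G : set_system R} {t phi} :
  F `=>` G -> small_o G t phi -> small_o F t phi.
Proof. by move=> FG H e e0; apply: FG; apply: H. Qed.

Lemma small_o_ub_filter_le {R : realType} {F G : set_system R} {t phi} :
  F `=>` G -> small_o_ub G t phi -> small_o_ub F t phi.
Proof. by move=> FG H e e0; apply: FG; apply: H. Qed.

(** * One-sided derivatives *)

Section has_deriv.
Context {R : realType}.
Implicit Types (A B : set R) (u v : R -> R) (c t d : R).

Definition has_deriv A u t d :=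
  small_o (within A (nbhs t)) t (fun s => u s - u t - d * (s - t)).

Lemma near_withinP A t (P : R -> Prop) :
  (\forall s \near within A (nbhs t), P s) <->
  exists2 r : R, 0 < r & forall s, A s -> `|s - t| < r -> P s.
Proof.
rewrite near_withinE; split.
  move=> /nbhs_ballP[r r0 H]; exists r => // s As st.
  by apply: H As; rewrite /ball /= distrC.
by move=> [r r0 H]; apply/nbhs_ballP; exists r => // s; rewrite /ball /= distrC => /H.
Qed.

Lemma has_deriv_lipschitz {A u t d} : has_deriv A u t d ->
  \forall s \near within A (nbhs t), `|u s - u t| <= (`|d| + 1) * `|s - t|.
Proof.
move=> /(_ 1 ltr01); apply: filterS => s; rewrite mul1r.
by have := ler_normD (u s - u t - d * (s - t)) (d * (s - t)); rewrite subrK normrM; lra.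
Qed.

Lemma has_deriv_cvg {A u t d} : has_deriv A u t d -> u @ within A (nbhs t) --> u t.
Proof.
move=> /has_deriv_lipschitz Hu; apply/cvgrPdist_le => e e0.
have k0 : 0 < `|d| + 1 by rewrite ltr_wpDl.
have near_t : \forall s \near within A (nbhs t), `|s - t| < e / (`|d| + 1).
  by apply/near_withinP; exists (e / (`|d| + 1)); rewrite ?divr_gt0.
apply: filterS2 Hu near_t => s h1 h2; rewrite distrC (le_trans h1) //.
by rewrite mulrC -ler_pdivlMr // ltW.
Qed.

Lemma has_deriv_id A t : has_deriv A id t 1.
Proof. by rewrite /has_deriv; apply: (eq_small_o small_o0) => s; rewrite mul1r subrr. Qed.

Lemma has_derivD {A u v t du dv} : has_deriv A u t du -> has_deriv A v t dv ->
  has_deriv A (fun s => u s + v s) t (du + dv).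
Proof. by move=> Hu Hv; apply: (eq_small_o (small_oD Hu Hv)) => s; ring. Qed.

Lemma has_derivZ {A} c {u t du} : has_deriv A u t du ->
  has_deriv A (fun s => c * u s) t (c * du).
Proof. by move=> Hu; apply: (eq_small_o (small_oZ c Hu)) => s; ring. Qed.

Lemma has_derivN {A u t du} : has_deriv A u t du -> has_deriv A (fun s => - u s) t (- du).
Proof. by move=> Hu; apply: (eq_small_o (small_oZ (-1) Hu)) => s; ring. Qed.

Lemma has_derivM {A u v t du dv} : has_deriv A u t du -> has_deriv A v t dv ->
  has_deriv A (fun s => u s * v s) t (du * v t + u t * dv).
Proof.
move=> Hu Hv; have v_cvg := has_deriv_cvg Hv; have /subr_cvg0 v_cvg0 := v_cvg.
have Hdu : \forall s \near within A (nbhs t), `|du * (s - t)| <= `|du| * `|s - t|.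
  by apply: nearW => s; rewrite normrM.
apply: (eq_small_o (small_oD (small_oD
  (small_o_bounded_mul (cvg_near_bounded v_cvg) Hu) (small_oZ (u t) Hv))
  (small_o_vanishing_mul v_cvg0 Hdu))) => s /=; ring.
Qed.

Lemma has_deriv_sum {I : Type} (r : seq I) {A} {u : I -> R -> R} {t} {du : I -> R} :
  (forall i, has_deriv A (u i) t (du i)) ->
  has_deriv A (fun s => \sum_(i <- r) u i s) t (\sum_(i <- r) du i).
Proof.
move=> Hu; apply: (eq_small_o (small_o_sum r Hu)) => s.
by rewrite mulr_suml -!sumrB.
Qed.

Lemma cvg_within_map {A B u t} : (forall s, A s -> B (u s)) ->
  u @ within A (nbhs t) --> u t -> u @ within A (nbhs t) --> within B (nbhs (u t)).
Proof.
move=> AB u_cvg P; rewrite !nbhs_filterE => BP.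
have := u_cvg _ BP; rewrite nbhs_filterE; apply: filterS2 (withinT A _) => s As.
by apply; apply: AB.
Qed.

Lemma has_deriv_comp {A B u v t du dv} : (forall s, A s -> B (u s)) ->
  has_deriv A u t du -> has_deriv B v (u t) dv ->
  has_deriv A (fun s => v (u s)) t (dv * du).
Proof.
move=> AB Hu Hv.
have Hvu : small_o (within A (nbhs t)) t
    (fun s => v (u s) - v (u t) - dv * (u s - u t)).
  exact: small_o_comp (cvg_within_map AB (has_deriv_cvg Hu))
    (has_deriv_lipschitz Hu) Hv.
by apply: (eq_small_o (small_oD Hvu (small_oZ dv Hu))) => s /=; ring.
Qed.

Lemma has_deriv_unique {A u t d1 d2} : (forall s, t < s -> A s) ->
  has_deriv A u t d1 -> has_deriv A u t d2 -> d1 = d2.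
Proof.
move=> A_right H1 H2; apply/eqP; rewrite -subr_eq0; apply: contraT => d12.
set e := `|d1 - d2| / 4.
have e0 : 0 < e by rewrite divr_gt0 // normr_gt0.
have sub : t^'+ `=>` within A (nbhs t) by apply: within_subset => s; apply: A_right.
have /filter_ex[s [ts h1 h2]] : \forall s \near t^'+, [/\ t < s,
    `|u s - u t - d1 * (s - t)| <= e * `|s - t| &
    `|u s - u t - d2 * (s - t)| <= e * `|s - t|].
  near=> s; split; near: s; [exact: nbhs_right_gt | exact: sub (H1 e e0) |
    exact: sub (H2 e e0)].
have key : `|d1 - d2| * `|s - t| <= 2 * e * `|s - t|.
  rewrite -normrM (_ : (d1 - d2) * (s - t) =
    (u s - u t - d2 * (s - t)) - (u s - u t - d1 * (s - t))); last by ring.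
  by apply: le_trans (ler_normB _ _) _; lra.
have : 0 < `|s - t| by rewrite normr_gt0 subr_eq0 gt_eqF.
have : 0 < `|d1 - d2| by rewrite normr_gt0.
rewrite /e in key => ? ?; have : (0 : R) < 0 by nra.
by rewrite ltxx.
Unshelve. all: by end_near.
Qed.

Lemma has_deriv_of_deriv_within {A u t d} : deriv_within A u t d -> has_deriv A u t d.
Proof.
move=> /cvgrPdist_le H e e0; have := H e e0.
rewrite !near_withinE => /nbhs_ballP[r r0 Hr]; apply/near_withinP; exists r => // s As st.
have [->|st0] := eqVneq s t; first by rewrite !subrr mulr0 subr0 normr0 mulr0.
have hne : s - t != 0 by rewrite subr_eq0.
have := Hr (s - t); rewrite /ball /= sub0r normrN => /(_ st) /(_ hne).
rewrite addrC subrK => /(_ As).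
have -> : u s - u t - d * (s - t) = - ((d - (u s - u t) / (s - t)) * (s - t)).
  by rewrite mulrBl divfK // opprB.
by rewrite normrN normrM ler_pM2r ?normr_gt0.
Qed.

Lemma deriv_within_of_is_derive A u t d : is_derive t 1 u d -> deriv_within A u t d.
Proof.
move=> [du <-]; apply: cvg_within_filter.
have -> : (fun h => (u (t + h) - u t) / h) =
    (fun h => h^-1 *: ((u \o shift t) (h *: 1) - u t)).
  by apply/funext => h /=; rewrite -[h%:A]/(h * 1) mulr1 (addrC h) mulrC.
exact: du.
Qed.

Lemma has_deriv_expR A c t :
  has_deriv A (fun s => expR (c * s)) t (c * expR (c * t)).
Proof.
apply/has_deriv_of_deriv_within/deriv_within_of_is_derive.
have Hc : is_derive t 1 (fun s : R => c * s) c.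
  by have := is_deriveZ c (is_derive_id t (1 : R)); rewrite /GRing.scale /= mulr1.
by rewrite mulrC; exact: is_derive1_comp (is_derive_expR (c * t)) Hc.
Qed.

End has_deriv.

(** * Monotonicity from upper Dini derivatives *)

Section dini_monotone.
Context {R : realType}.
Implicit Types (a b c : R) (u v : R -> R).

Lemma last_zero {a b v} : a <= b -> v a <= 0 -> 0 < v b ->
  {within `[a, b], continuous v} ->
  exists c, [/\ a <= c < b, v c = 0 & forall s, c < s <= b -> 0 < v s].
Proof.
move=> ab va vb /subspace_continuousP v_cont.
set S := [set s | a <= s <= b /\ v s <= 0].
have hS : has_sup S by split; [exists a; rewrite /S /= lexx ab | exists b => s [/andP[]]].
set c := sup S.
have ac : a <= c by apply: sup_upper_bound => //; rewrite /S /= lexx ab.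
have cb : c <= b by apply: ge_sup; [exists a; rewrite /S /= lexx ab | move=> s [/andP[]]].
have v_pos s : c < s <= b -> 0 < v s.
  move=> /andP[cs sb]; rewrite ltNge; apply/negP => vs.
  have : S s by rewrite /S /= sb (le_trans ac (ltW cs)).
  by move=> /(sup_upper_bound hS); rewrite leNgt cs.
have near_c (e : R) : 0 < e -> exists2 r : R, 0 < r &
    forall s, a <= s <= b -> `|s - c| < r -> `|v s - v c| <= e.
  move=> e0; have /cvgr_distC_le/(_ e e0)/near_withinP[r r0 Hr] :=
    v_cont c (ltac:(by rewrite /= in_itv /= ac cb)).
  by exists r => // s sab; apply: Hr; rewrite /= in_itv.
have vc_le0 : v c <= 0.
  rewrite leNgt; apply/negP => vc0.
  have [r r0 Hr] := near_c (v c / 2) (divr_gt0 vc0 (ltr0Sn _ 1)).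
  have [s [sab vs] cs] := sup_adherent r0 hS; rewrite -/c in cs.
  have sc : s <= c by apply: sup_upper_bound.
  have : `|s - c| < r by rewrite distrC ger0_norm ?subr_ge0 //; lra.
  by move=> /(Hr s sab); rewrite ler_norml => /andP[+ _]; lra.
have cb' : c < b by rewrite lt_neqAle cb andbT; apply: contraTneq vb => <-; rewrite -leNgt.
have vc_ge0 : 0 <= v c.
  rewrite leNgt; apply/negP => vc0.
  have e0 : 0 < - v c / 2 by rewrite divr_gt0 // oppr_gt0.
  have [r r0 Hr] := near_c _ e0.
  pose s := c + Num.min r (b - c) / 2.
  have m0 : 0 < Num.min r (b - c) by rewrite lt_min r0 subr_gt0.
  have [m1 m2] : Num.min r (b - c) <= r /\ Num.min r (b - c) <= b - c.
    by split; rewrite ge_min lexx ?orbT.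
  have cs : c < s by rewrite /s ltrDl divr_gt0.
  have sb : s <= b by rewrite /s; lra.
  have : `|s - c| < r by rewrite ger0_norm ?subr_ge0 ?ltW // /s; lra.
  move=> /(Hr s); rewrite ler_norml (le_trans ac (ltW cs)) sb => /(_ isT) /andP[_].
  by have := v_pos s; rewrite cs sb => /(_ isT); lra.
by exists c; split; rewrite ?ac //; apply/eqP; rewrite eq_le vc_le0.
Qed.

Lemma dini_nonincreasing {a b u} : a <= b -> {within `[a, b], continuous u} ->
  (forall t, a <= t < b -> small_o_ub t^'+ t (fun s => u s - u t)) ->
  u b <= u a.
Proof.
move=> ab u_cont u_dini; rewrite leNgt; apply/negP => uab.
have {}ab : a < b.
  by rewrite lt_neqAle ab andbT; apply: contraTneq uab => ->; rewrite ltxx.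
pose eps := (u b - u a) / (b - a) / 2.
have eps0 : 0 < eps by rewrite !divr_gt0 // subr_gt0.
pose v s := u s - u a - eps * (s - a).
have vb : 0 < v b.
  have -> : v b = (u b - u a) / 2 by rewrite /v /eps; field; rewrite subr_eq0 gt_eqF.
  by rewrite divr_gt0 // subr_gt0.
have v_cont : {within `[a, b], continuous v}.
  apply/subspace_continuousP => s sab.
  have us := (subspace_continuousP _ _).1 u_cont s sab.
  apply: cvgB; first exact: cvgB us (cvg_cst _).
  exact: (cvgM (cvg_cst eps) (cvgB (cvg_within _) (cvg_cst a))).
have va : v a <= 0 by rewrite /v !subrr mulr0 subrr.
have [c [/andP[ac cb] vc0 v_pos]] := last_zero (ltW ab) va vb v_cont.
have eps20 : 0 < eps / 2 by rewrite divr_gt0.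
have /filter_ex[s [cs sb us]] : \forall s \near c^'+,
    [/\ c < s, s <= b & u s - u c <= eps / 2 * `|s - c|].
  near=> s; split; near: s;
    [exact: nbhs_right_gt | exact: nbhs_right_le | by apply: u_dini; rewrite ?ac ?cb].
have : 0 < v s by apply: v_pos; rewrite cs.
have : 0 < eps * (s - c) by rewrite mulr_gt0 // subr_gt0.
move: us vc0; rewrite /v gtr0_norm ?subr_gt0 //; lra.
Unshelve. all: by end_near.
Qed.

Lemma at_right_within {A t b} : t < b -> (forall s, t < s < b -> A s) ->
  t^'+ `=>` within A (nbhs t).
Proof.
move=> tb Ab P; rewrite /at_right /within /= => AP.
by apply: filterS2 AP (lt_nbhsl_lt tb) => s APs sb ts; apply/APs/Ab; rewrite ts (sb (ltW ts)).
Qed.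

Lemma nonincreasing_of_deriv {A a b u} du : a <= b -> (forall s, a <= s <= b -> A s) ->
  (forall t, a <= t <= b -> has_deriv A u t (du t)) ->
  (forall t, a <= t < b -> du t <= 0) -> u b <= u a.
Proof.
move=> ab Aab u_deriv du_le0; apply: dini_nonincreasing => // [|t /andP[ta tb]].
  apply/subspace_continuousP => t; rewrite /= in_itv /= => tab.
  apply: cvg_trans (has_deriv_cvg (u_deriv t tab)); apply: cvg_app.
  by apply: within_subset => s; rewrite /= in_itv /=; apply: Aab.
have tab : a <= t <= b by rewrite ta ltW.
have Hd : small_o_ub t^'+ t (fun s => u s - u t - du t * (s - t)).
  apply: small_o_ub_filter_le (at_right_within tb _) (small_o_ubW (u_deriv t tab)).
  by move=> s /andP[ts sb]; apply: Aab; rewrite (le_trans ta (ltW ts)) ltW.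
apply: (small_o_ub_le Hd); apply: filterS (nbhs_right_gt t) => s ts.
have : du t * (s - t) <= 0 by rewrite mulr_le0_ge0 ?du_le0 ?ta // subr_ge0 ltW.
lra.
Qed.

Lemma decreasing_of_deriv {A a b u} du : a < b -> (forall s, a <= s <= b -> A s) ->
  (forall t, a <= t <= b -> has_deriv A u t (du t)) ->
  (forall t, a <= t < b -> du t <= 0) -> (forall t, a < t < b -> du t < 0) ->
  u b < u a.
Proof.
move=> ab Aab u_deriv du_le0 du_lt0; pose m := (a + b) / 2.
have am : a < m by rewrite /m; lra.
have mb : m < b by rewrite /m; lra.
have e0 : 0 < - du m / 2 by rewrite divr_gt0 // oppr_gt0 du_lt0 // am mb.
have mmb : a <= m <= b by rewrite !ltW.
have /filter_ex[s [ms sb us]] : \forall s \near m^'+, [/\ m < s, s <= b &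
    `|u s - u m - du m * (s - m)| <= - du m / 2 * `|s - m|].
  near=> s; split; near: s; [exact: nbhs_right_gt | exact: nbhs_right_le |].
  apply: (at_right_within mb) (u_deriv m mmb _ e0) => s /andP[ms sb].
  by apply: Aab; rewrite (le_trans (ltW am) (ltW ms)) ltW.
have usm : u s < u m.
  move: us; rewrite [`|s - m|]gtr0_norm ?subr_gt0 // ler_norml => /andP[_].
  have : 0 < - du m * (s - m) by rewrite mulr_gt0 ?oppr_gt0 ?subr_gt0 ?du_lt0 ?am.
  lra.
have as_ : a <= s by rewrite (le_trans (ltW am) (ltW ms)).
have ubs : u b <= u s.
  apply: (nonincreasing_of_deriv (A := A) du) => // r /andP[sr rb].
  - by apply: Aab; rewrite rb (le_trans as_ sr).
  - by apply: u_deriv; rewrite rb (le_trans as_ sr).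
  - by apply: du_le0; rewrite rb (le_trans as_ sr).
have uma : u m <= u a.
  apply: (nonincreasing_of_deriv (A := A) du) (ltW am) _ _ _ => r /andP[ar rm].
  - by apply: Aab; rewrite ar (le_trans rm (ltW mb)).
  - by apply: u_deriv; rewrite ar (le_trans rm (ltW mb)).
  - by apply: du_le0; rewrite ar (lt_trans rm mb).
by rewrite (le_lt_trans ubs) // (lt_le_trans usm).
Unshelve. all: by end_near.
Qed.

End dini_monotone.

(** * Concave increasing functions on [0, 1] *)

Lemma I01_0 {R : realType} : I01 (0 : R).
Proof. by rewrite /I01 /= lexx ler01. Qed.

Lemma I01_1 {R : realType} : I01 (1 : R).
Proof. by rewrite /I01 /= lexx ler01. Qed.

Lemma I01_ge0 {R : realType} {z : R} : I01 z -> 0 <= z.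
Proof. by move=> /andP[]. Qed.

Lemma I01_le1 {R : realType} {z : R} : I01 z -> z <= 1.
Proof. by move=> /andP[]. Qed.

Section concave_increasing.
Context {R : realType} {h dh : R -> R}.
Hypothesis h_deriv : forall z, I01 z -> has_deriv I01 h z (dh z).
Hypothesis h_incr : strictly_incr_on01 h.
Hypothesis h_concave : concave_on01 h.

Lemma concave_tangent {a b} : I01 a -> I01 b -> h b <= h a + dh a * (b - a).
Proof.
move=> Ia Ib; rewrite -lerBlDl; apply/ler_addgt0Pr => e e0.
have k0 : 0 < `|b - a| + 1 by rewrite ltr_wpDl.
have [r r0 Hr] := (near_withinP _ _ _).1 (h_deriv a Ia _ (divr_gt0 e0 k0)).
pose l := Num.min 1 (r / (2 * (`|b - a| + 1))).
have l0 : 0 < l by rewrite lt_min ltr01 !divr_gt0 ?mulr_gt0.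
have l1 : l <= 1 by rewrite ge_min lexx.
have lr : l * (`|b - a| + 1) <= r / 2.
  have H : l <= r / (2 * (`|b - a| + 1)) by rewrite ge_min lexx orbT.
  have E : r / (2 * (`|b - a| + 1)) * (`|b - a| + 1) = r / 2.
    by field; rewrite gt_eqF.
  by rewrite -E ler_pM2r.
pose m := (1 - l) * a + (1 - (1 - l)) * b.
have ma : m - a = l * (b - a) by rewrite /m; ring.
have Im : I01 m.
  move: Ia Ib; rewrite /I01 /m /= => /andP[a0 a1] /andP[b0 b1].
  by apply/andP; split; nra.
have hm : (1 - l) * h a + (1 - (1 - l)) * h b <= h m.
  by apply: h_concave => //; apply/andP; split; lra.
have mar : `|m - a| < r.
  rewrite ma normrM ger0_norm ?ltW //.
  have : l * `|b - a| <= l * (`|b - a| + 1) by rewrite ler_pM2l // lerDl.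
  lra.
have := Hr m Im mar; rewrite ler_norml ma normrM (ger0_norm (ltW l0)) => /andP[_].
have -> : e / (`|b - a| + 1) * (l * `|b - a|) = l * (e * (`|b - a| / (`|b - a| + 1))).
  by ring.
have : `|b - a| / (`|b - a| + 1) <= 1 by rewrite ler_pdivrMr // mul1r lerDl.
move=> ba1 hle; rewrite -(ler_pM2l l0); move: hm hle.
have : l * (e * (`|b - a| / (`|b - a| + 1))) <= l * e.
  by rewrite ler_pM2l // -[leRHS]mulr1 ler_pM2l.
lra.
Qed.

Lemma deriv_nonincreasing {a b} : I01 a -> I01 b -> a <= b -> dh b <= dh a.
Proof.
move=> Ia Ib; rewrite le_eqVlt => /predU1P[-> //|ab].
have T1 := concave_tangent Ia Ib; have T2 := concave_tangent Ib Ia.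
have : 0 < b - a by rewrite subr_gt0.
nra.
Qed.

Lemma deriv_gt0 {z} : I01 z -> z < 1 -> 0 < dh z.
Proof.
move=> Iz z1; have T := concave_tangent Iz I01_1; have H := h_incr _ _ Iz I01_1 z1.
have : 0 < 1 - z by rewrite subr_gt0.
nra.
Qed.

Lemma deriv_ge0 {z} : I01 z -> 0 <= dh z.
Proof.
move=> Iz; have [z1|z1] := ltP z 1; first exact/ltW/deriv_gt0.
have {Iz z1}-> : z = 1 by move: Iz => /andP[_]; lra.
apply/ler_addgt0Pr => e e0.
have [r r0 Hr] := (near_withinP _ _ _).1 (h_deriv 1 I01_1 _ e0).
pose s := 1 - Num.min r 1 / 2.
have m0 : 0 < Num.min r 1 by rewrite lt_min r0 ltr01.
have [m1 m2] : Num.min r 1 <= r /\ Num.min r 1 <= 1.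
  by split; rewrite ge_min lexx ?orbT.
have Is : I01 s by rewrite /I01 /s /=; apply/andP; split; lra.
have s1 : s < 1 by rewrite /s; lra.
have ns : `|s - 1| = Num.min r 1 / 2.
  by rewrite /s addrC addKr normrN ger0_norm // divr_ge0 // ltW.
have := Hr s Is; rewrite ns => /(_ ltac:(lra)); rewrite ler_norml => /andP[H1 _].
have := h_incr _ _ Is I01_1 s1; have : 0 < Num.min r 1 / 2 by rewrite divr_gt0.
move: H1; rewrite /s; nra.
Qed.

End concave_increasing.

(** * The network SIR model *)

Lemma cvg_sum {R : realType} {I : Type} (r : seq I) {F : set_system R} {FF : Filter F}
    (u : I -> R -> R) (l : I -> R) :
  (forall i, u i @ F --> l i) ->
  (fun s => \sum_(i <- r) u i s) @ F --> \sum_(i <- r) l i.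
Proof. by move=> ul; apply: cvg_big => //; exact: add_continuous. Qed.

Lemma at_right_Rplus {R : realType} {t : R} : 0 <= t ->
  t^'+ `=>` within Rplus_half (nbhs t).
Proof. by move=> t0; apply: within_subset => s /ltW; apply: le_trans. Qed.

Lemma nonincreasing_on_Rplus {R : realType} {u : R -> R} du {a b : R} :
  0 <= a -> a <= b -> (forall t, 0 <= t -> has_deriv Rplus_half u t (du t)) ->
  (forall t, a <= t < b -> du t <= 0) -> u b <= u a.
Proof.
move=> a0 ab u_deriv du_le0; apply: (nonincreasing_of_deriv (A := Rplus_half) du) => // [s|t].
  by move=> /andP[+ _]; apply: le_trans.
by move=> /andP[+ _] => /(le_trans a0); apply: u_deriv.
Qed.

Lemma decreasing_on_Rplus {R : realType} {u : R -> R} du {a b : R} :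
  0 <= a -> a < b -> (forall t, 0 <= t -> has_deriv Rplus_half u t (du t)) ->
  (forall t, a <= t < b -> du t <= 0) -> (forall t, a < t < b -> du t < 0) ->
  u b < u a.
Proof.
move=> a0 ab u_deriv; apply: (decreasing_of_deriv (A := Rplus_half) du) => // [s|t].
  by move=> /andP[+ _]; apply: le_trans.
by move=> /andP[+ _] => /(le_trans a0); apply: u_deriv.
Qed.

Lemma continuous_within_itv {R : realType} {u : R -> R} {a b : R} : 0 <= a ->
  (forall s, a <= s <= b -> u @ within Rplus_half (nbhs s) --> u s) ->
  {within `[a, b], continuous u}.
Proof.
move=> a0 u_cont; apply/subspace_continuousP => s; rewrite /= in_itv /= => sab.
apply: cvg_trans (u_cont s sab); apply: cvg_app; apply: within_subset => r.
by rewrite /= in_itv /= => /andP[ar _]; apply: le_trans ar.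
Qed.

Section sir_network.
Variables (R : realType) (n : nat) (gamma G : R).
Variables (g h dh : 'I_n -> R -> R) (x y : 'I_n -> R -> R).
Implicit Types (t s tau : R) (i j : 'I_n).

Definition Y t := \sum_(j < n) h j (y j t).
Definition xg i t := x i t * g i (x i t).
Definition dy j t := xg j t * Y t - gamma * y j t.
Definition slope j t := dh j (y j t).
Definition dY t := \sum_(j < n) slope j t * dy j t.
Definition P t := \sum_(j < n) slope j t * xg j t.

Hypothesis gamma_gt0 : 0 < gamma.
Hypothesis h_deriv : forall j z, I01 z -> has_deriv I01 (h j) z (dh j z).
Hypothesis dh_cont : forall j z, I01 z -> dh j @ within I01 (nbhs z) --> dh j z.
Hypothesis h_incr : forall j, strictly_incr_on01 (h j).
Hypothesis h_concave : forall j, concave_on01 (h j).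
Hypothesis h0 : forall j, h j 0 = 0.
Hypothesis g_cont : forall i z, I01 z -> g i @ within I01 (nbhs z) --> g i z.
Hypothesis g_gt0 : forall i z, I01 z -> 0 < g i z.
Hypothesis g_le : forall i z, I01 z -> g i z <= G.
Hypothesis xg_incr : forall i, strictly_incr_on01 (fun z => z * g i z).
Hypothesis sol_I01 : forall i t, 0 <= t -> I01 (x i t) /\ I01 (y i t).
Hypothesis x_deriv : forall i t, 0 <= t ->
  has_deriv Rplus_half (x i) t (- (xg i t * Y t)).
Hypothesis y_deriv : forall i t, 0 <= t -> has_deriv Rplus_half (y i) t (dy i t).
Hypothesis xy0_le1 : forall i, x i 0 + y i 0 <= 1.
Variables (i0 j1 : 'I_n).
Hypothesis x_i0_0_gt0 : 0 < x i0 0.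
Hypothesis y_j1_0_gt0 : 0 < y j1 0.

Local Notation cont_at u t := (u @ within Rplus_half (nbhs t) --> u t).

Lemma x_I01 {i t} : 0 <= t -> I01 (x i t). Proof. by move=> /(sol_I01 i)[]. Qed.
Lemma y_I01 {i t} : 0 <= t -> I01 (y i t). Proof. by move=> /(sol_I01 i)[]. Qed.

Lemma Y_deriv {t} : 0 <= t -> has_deriv Rplus_half Y t (dY t).
Proof.
move=> t0; apply: has_deriv_sum => j.
by apply: has_deriv_comp (y_deriv j _ t0) (h_deriv j _ (y_I01 t0)) => s; apply: y_I01.
Qed.

Lemma cont_comp01 {u v : R -> R} {t} : 0 <= t ->
  (forall s, 0 <= s -> I01 (u s)) -> cont_at u t ->
  v @ within I01 (nbhs (u t)) --> v (u t) -> cont_at (fun s => v (u s)) t.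
Proof. by move=> t0 uI u_cont; apply: cvg_comp (cvg_within_map uI u_cont). Qed.

Lemma cont_at_right {u : R -> R} {tau} : 0 <= tau -> cont_at u tau -> u @ tau^'+ --> u tau.
Proof. by move=> tau0; apply: cvg_trans; apply/cvg_app/at_right_Rplus. Qed.

Lemma xg_cont i {t} : 0 <= t -> cont_at (xg i) t.
Proof.
move=> t0; have x_cont := has_deriv_cvg (x_deriv i _ t0).
exact: (cvgM x_cont (cont_comp01 t0 (@x_I01 i) x_cont (g_cont i _ (x_I01 t0)))).
Qed.

Lemma slope_cont j {t} : 0 <= t -> cont_at (slope j) t.
Proof.
move=> t0; apply: (cont_comp01 t0 (@y_I01 j) (has_deriv_cvg (y_deriv j _ t0))).
exact: dh_cont j _ (y_I01 t0).
Qed.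

Lemma dY_cont {t} : 0 <= t -> cont_at dY t.
Proof.
move=> t0; apply: cvg_sum => j.
exact: (cvgM (slope_cont j t0) (cvgB (cvgM (xg_cont j t0) (has_deriv_cvg (Y_deriv t0)))
  (cvgM (cvg_cst gamma) (has_deriv_cvg (y_deriv j _ t0))))).
Qed.

Lemma P_cont {t} : 0 <= t -> cont_at P t.
Proof.
by move=> t0; apply: cvg_sum => j; exact: (cvgM (slope_cont j t0) (xg_cont j t0)).
Qed.

Lemma slope_ge0 j {t} : 0 <= t -> 0 <= slope j t.
Proof. by move=> t0; apply: (deriv_ge0 (h_deriv j) (h_incr j) (h_concave j)); exact: y_I01. Qed.

Lemma slope_le j {t} : 0 <= t -> slope j t <= dh j 0.
Proof.
move=> t0; have Iy := y_I01 (i := j) t0.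
exact: (deriv_nonincreasing (h_deriv j) (h_concave j) I01_0 Iy (I01_ge0 Iy)).
Qed.

Lemma xg_ge0 i {t} : 0 <= t -> 0 <= xg i t.
Proof.
move=> t0; have Ix := x_I01 (i := i) t0.
by rewrite mulr_ge0 ?(I01_ge0 Ix) ?ltW ?g_gt0.
Qed.

Lemma xg_le i {t} : 0 <= t -> xg i t <= g i 1.
Proof.
move=> t0; have Ix := x_I01 (i := i) t0; have [x1|x1] := ltP (x i t) 1.
  by have := xg_incr i _ _ Ix I01_1 x1; rewrite mul1r => /ltW.
by rewrite /xg (_ : x i t = 1) ?mul1r //; have := I01_le1 Ix; lra.
Qed.

Lemma h_ge0 j z : I01 z -> 0 <= h j z.
Proof.
move=> Iz; rewrite -(h0 j); have [z0|z0] := ltP 0 z.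
  exact: ltW (h_incr j _ _ I01_0 Iz z0).
by have -> : z = 0 by have := I01_ge0 Iz; lra.
Qed.

Lemma h_le j z : I01 z -> h j z <= h j 1.
Proof.
move=> Iz; have [z1|z1] := ltP z 1; first exact: ltW (h_incr j _ _ Iz I01_1 z1).
by have -> : z = 1 by have := I01_le1 Iz; lra.
Qed.

Lemma Y_ge0 {t} : 0 <= t -> 0 <= Y t.
Proof. by move=> t0; apply: sumr_ge0 => j _; apply/h_ge0/y_I01. Qed.

Lemma Y_le {t} : 0 <= t -> Y t <= \sum_(j < n) h j 1.
Proof. by move=> t0; apply: ler_sum => j _; apply/h_le/y_I01. Qed.

Lemma P_ge0 {t} : 0 <= t -> 0 <= P t.
Proof. by move=> t0; apply: sumr_ge0 => j _; rewrite mulr_ge0 ?slope_ge0 ?xg_ge0. Qed.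

Definition P_max := \sum_(j < n) dh j 0 * g j 1.

Lemma P_le {t} : 0 <= t -> P t <= P_max.
Proof.
by move=> t0; apply: ler_sum => j _; rewrite ler_pM ?slope_ge0 ?xg_ge0 ?slope_le ?xg_le.
Qed.

Lemma x_add_y_le1 i {t} : 0 <= t -> x i t + y i t <= 1.
Proof.
move=> t0; apply: le_trans (xy0_le1 i).
apply: (nonincreasing_on_Rplus (u := fun s => x i s + y i s)
  (fun s => - (xg i s * Y s) + dy i s)) => // s.
  by move=> s0; exact: has_derivD (x_deriv i _ s0) (y_deriv i _ s0).
move=> /andP[s0 _]; have := mulr_ge0 (ltW gamma_gt0) (I01_ge0 (y_I01 (i := i) s0)).
by rewrite /dy; lra.
Qed.

Lemma y_j1_gt0 {t} : 0 <= t -> 0 < y j1 t.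
Proof.
move=> t0; pose u s := - (expR (gamma * s) * y j1 s).
have : u t <= u 0.
  apply: (nonincreasing_on_Rplus (fun s => - (gamma * expR (gamma * s) * y j1 s
    + expR (gamma * s) * dy j1 s))) => // s.
    by move=> s0; exact/has_derivN/(has_derivM (has_deriv_expR _ _ _) (y_deriv j1 _ s0)).
  move=> /andP[s0 _]; rewrite /dy oppr_le0.
  have -> : gamma * expR (gamma * s) * y j1 s +
      expR (gamma * s) * (xg j1 s * Y s - gamma * y j1 s) =
      expR (gamma * s) * (xg j1 s * Y s) by ring.
  by apply: mulr_ge0; [exact: expR_ge0 | apply: mulr_ge0; [exact: xg_ge0 | exact: Y_ge0]].
rewrite /u mulr0 expR0 mul1r lerN2 => H.
by have := lt_le_trans y_j1_0_gt0 H; rewrite pmulr_rgt0 // expR_gt0.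
Qed.

Lemma Y_gt0 {t} : 0 <= t -> 0 < Y t.
Proof.
move=> t0; rewrite /Y (bigD1 j1) //= ltr_pwDl //.
  rewrite -(h0 j1); apply: h_incr; [exact: I01_0 | exact: y_I01 | exact: y_j1_gt0].
by apply: sumr_ge0 => j _; apply/h_ge0/y_I01.
Qed.

Lemma x_i0_gt0 {t} : 0 <= t -> 0 < x i0 t.
Proof.
move=> t0; pose K := G * \sum_(j < n) h j 1; pose u s := - (expR (K * s) * x i0 s).
have : u t <= u 0.
  apply: (nonincreasing_on_Rplus (fun s => - (K * expR (K * s) * x i0 s
    + expR (K * s) * - (xg i0 s * Y s)))) => // s.
    by move=> s0; exact/has_derivN/(has_derivM (has_deriv_expR _ _ _) (x_deriv i0 _ s0)).
  move=> /andP[s0 _]; rewrite oppr_le0.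
  have -> : K * expR (K * s) * x i0 s + expR (K * s) * - (xg i0 s * Y s) =
      expR (K * s) * x i0 s * (K - g i0 (x i0 s) * Y s) by rewrite /xg; ring.
  have Ix := x_I01 (i := i0) s0.
  apply: mulr_ge0; first by apply: mulr_ge0; [exact: expR_ge0 | exact: I01_ge0 Ix].
  rewrite subr_ge0 /K; apply: ler_pM; [exact/ltW/g_gt0 | exact: Y_ge0 |
    exact: g_le | exact: Y_le].
rewrite /u mulr0 expR0 mul1r lerN2 => H.
by have := lt_le_trans x_i0_0_gt0 H; rewrite pmulr_rgt0 // expR_gt0.
Qed.

Lemma x_nonincreasing i {s t} : 0 <= s -> s <= t -> x i t <= x i s.
Proof.
move=> s0 st; apply: (nonincreasing_on_Rplus (fun r => - (xg i r * Y r))) => // r.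
  exact: x_deriv.
by move=> /andP[/(le_trans s0) r0 _]; rewrite oppr_le0 mulr_ge0 ?xg_ge0 ?Y_ge0.
Qed.

Lemma xg_nonincreasing i {s t} : 0 <= s -> s <= t -> xg i t <= xg i s.
Proof.
move=> s0 st; have t0 := le_trans s0 st.
rewrite le_eqVlt in st; case/predU1P: st => [-> //|st].
have := x_nonincreasing i s0 (ltW st); rewrite le_eqVlt => /predU1P[xts|xts].
  by rewrite /xg xts.
exact/ltW/(xg_incr i _ _ (x_I01 t0) (x_I01 s0) xts).
Qed.

Lemma x_i0_decreasing {s t} : 0 <= s -> s < t -> x i0 t < x i0 s.
Proof.
move=> s0 st; apply: (decreasing_on_Rplus (fun r => - (xg i0 r * Y r))) => // [r|r|].
- exact: x_deriv.
- by move=> /andP[/(le_trans s0) r0 _]; rewrite oppr_le0 mulr_ge0 ?xg_ge0 ?Y_ge0.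
- move=> r /andP[/ltW/(le_trans s0) r0 _].
  rewrite oppr_lt0 mulr_gt0 ?Y_gt0 // mulr_gt0 ?x_i0_gt0 //.
  exact/g_gt0/x_I01.
Qed.

Lemma xg_i0_decreasing {s t} : 0 <= s -> s < t -> xg i0 t < xg i0 s.
Proof.
move=> s0 st; have t0 := le_trans s0 (ltW st).
exact: (xg_incr i0 _ _ (x_I01 t0) (x_I01 s0) (x_i0_decreasing s0 st)).
Qed.

Lemma slope_i0_gt0 {t} : 0 <= t -> 0 < slope i0 t.
Proof.
move=> t0; apply: (deriv_gt0 (h_deriv i0) (h_incr i0) (h_concave i0) (y_I01 t0)).
by have := x_add_y_le1 i0 t0; have := x_i0_gt0 t0; lra.
Qed.

Lemma slope_increment_mul_le0 j {tau s} : 0 <= tau -> 0 <= s ->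
  (slope j s - slope j tau) * (y j s - y j tau) <= 0.
Proof.
move=> tau0 s0; have Is := y_I01 (i := j) s0; have Itau := y_I01 (i := j) tau0.
have [ys|ys] := leP (y j tau) (y j s).
  apply: mulr_le0_ge0; last by rewrite subr_ge0.
  by rewrite subr_le0; exact: (deriv_nonincreasing (h_deriv j) (h_concave j) Itau Is ys).
apply: mulr_ge0_le0; last by rewrite subr_le0 ltW.
by rewrite subr_ge0; exact: (deriv_nonincreasing (h_deriv j) (h_concave j) Is Itau (ltW ys)).
Qed.

Definition curvature_term j tau s :=
  (slope j s - slope j tau) * (dy j tau - gamma * (y j s - y j tau)).

(* Near tau+, both y_j(s) - y_j(tau) and dy_j(tau) - gamma (y_j(s) - y_j(tau))
   have the sign of dy_j(tau), while h_j' is nonincreasing. *)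
Lemma curvature_term_le0_near j {tau} : 0 <= tau -> dy j tau != 0 ->
  \forall s \near tau^'+, curvature_term j tau s <= 0.
Proof.
move=> tau0; set c := dy j tau => c0.
have y_d := small_o_filter_le (at_right_Rplus tau0) (y_deriv j _ tau0).
have e0 : 0 < `|c| / 2 by rewrite divr_gt0 // normr_gt0.
have g0 : 0 < 1 / (2 * gamma) by rewrite divr_gt0 ?mulr_gt0.
near=> s.
have ts : tau < s by near: s; exact: nbhs_right_gt.
have u0 : 0 < s - tau by rewrite subr_gt0.
have gs : gamma * (s - tau) <= 1 / 2.
  have : s - tau < 1 / (2 * gamma) by near: s; exact: nbhs_right_ltDr.
  by rewrite ltr_pdivlMr ?mulr_gt0 //; nra.
have dy_s : `|y j s - y j tau - c * (s - tau)| <= `|c| / 2 * `|s - tau|.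
  by near: s; exact: y_d.
have cc : `|c| * `|c| = c * c by rewrite -!expr2 real_normK ?num_real.
have c2 : 0 < c * c by rewrite -cc mulr_gt0 ?normr_gt0.
have := slope_increment_mul_le0 j tau0 (le_trans tau0 (ltW ts)).
move: dy_s; rewrite /curvature_term -/c [`|s - tau|]gtr0_norm //.
move: (slope j s - slope j tau) (y j s - y j tau) => A B dyB AB.
have : `|B * c - c * c * (s - tau)| <= c * c * (s - tau) / 2.
  rewrite (_ : B * c - _ = c * (B - c * (s - tau))); last by ring.
  by rewrite normrM -cc (le_trans (ler_wpM2l (normr_ge0 c) dyB)) //; lra.
rewrite ler_norml => /andP[cB1 cB2].
have ccu : 0 < c * c * (s - tau) by rewrite mulr_gt0.
have Bc : 0 < B * c by lra.
have Cc : 0 <= (c - gamma * B) * c.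
  have := ler_wpM2l (ltW gamma_gt0) cB2; have := ler_wpM2l (ltW c2) gs.
  lra.
rewrite -(pmulr_lle0 _ Bc).
rewrite (_ : A * _ * _ = (A * B) * ((c - gamma * B) * c)); last by ring.
exact: mulr_le0_ge0.
Unshelve. all: by end_near.
Qed.

Lemma curvature_term_dini j {tau} : 0 <= tau ->
  small_o_ub tau^'+ tau (curvature_term j tau).
Proof.
move=> tau0; have [c0|c0] := eqVneq (dy j tau) 0; last first.
  apply: (small_o_ub_le (small_o_ubW small_o0)).
  exact: curvature_term_le0_near tau0 c0.
have slope_cvg : (fun s => slope j s - slope j tau) @ tau^'+ --> 0.
  exact/subr_cvg0/(cont_at_right tau0 (slope_cont j tau0)).
have y_lip : \forall s \near tau^'+,
    `|dy j tau - gamma * (y j s - y j tau)| <= (gamma * (`|dy j tau| + 1)) * `|s - tau|.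
  apply: filterS (at_right_Rplus tau0 _ (has_deriv_lipschitz (y_deriv j _ tau0))) => s.
  rewrite c0 sub0r normrN normrM (gtr0_norm gamma_gt0) -mulrA.
  by rewrite ler_pM2l.
exact/small_o_ubW/(small_o_vanishing_mul slope_cvg y_lip).
Qed.

Definition susceptible_term tau s :=
  Y tau * \sum_(j < n) slope j s * (xg j s - xg j tau).

Lemma susceptible_term_le0 {tau s} : 0 <= tau -> tau <= s -> susceptible_term tau s <= 0.
Proof.
move=> tau0 ts; have s0 := le_trans tau0 ts.
apply: mulr_ge0_le0; first exact: Y_ge0.
apply: sumr_le0 => j _; apply: mulr_ge0_le0; first exact: slope_ge0.
by rewrite subr_le0; apply: xg_nonincreasing.
Qed.

Lemma dY_increment_le {tau s} : 0 <= tau -> tau <= s ->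
  dY s - dY tau - dY tau * (P tau - gamma) * (s - tau) - susceptible_term tau s <=
  \sum_(j < n) curvature_term j tau s
  + (P s - gamma) * (Y s - Y tau - dY tau * (s - tau))
  + (P s - P tau) * (dY tau * (s - tau)).
Proof.
move=> tau0 ts; have s0 := le_trans tau0 ts.
pose F j := curvature_term j tau s + (Y s - Y tau) * (slope j s * xg j s)
  - gamma * (slope j tau * (y j s - y j tau)).
have dY_split : dY s - dY tau - susceptible_term tau s = \sum_(j < n) F j.
  rewrite /susceptible_term /dY mulr_sumr -!sumrB; apply: eq_bigr => j _.
  by rewrite /F /curvature_term /dy; ring.
have F_split : \sum_(j < n) F j = \sum_(j < n) curvature_term j tau s
    + (Y s - Y tau) * P s - gamma * \sum_(j < n) slope j tau * (y j s - y j tau).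
  by rewrite /F sumrB big_split /= -!mulr_sumr.
have Y_concave : Y s - Y tau <= \sum_(j < n) slope j tau * (y j s - y j tau).
  rewrite /Y -sumrB; apply: ler_sum => j _; rewrite lerBlDl.
  exact: (concave_tangent (h_deriv j) (h_concave j) (y_I01 tau0) (y_I01 s0)).
have := ler_wpM2l (ltW gamma_gt0) Y_concave.
move: dY_split; rewrite F_split /susceptible_term; lra.
Qed.

Lemma dY_dini {tau} : 0 <= tau -> small_o_ub tau^'+ tau
  (fun s => dY s - dY tau - dY tau * (P tau - gamma) * (s - tau) - susceptible_term tau s).
Proof.
move=> tau0; have sub := at_right_Rplus tau0.
have P_right := cont_at_right tau0 (P_cont tau0).
have Y_term : small_o tau^'+ tau
    (fun s => (P s - gamma) * (Y s - Y tau - dY tau * (s - tau))).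
  exact: small_o_bounded_mul (cvg_near_bounded (cvgB P_right (cvg_cst gamma)))
    (small_o_filter_le sub (Y_deriv tau0)).
have P_term : small_o tau^'+ tau (fun s => (P s - P tau) * (dY tau * (s - tau))).
  apply: (small_o_vanishing_mul (C := `|dY tau|)); first exact/subr_cvg0.
  by apply: nearW => s; rewrite normrM.
apply: (small_o_ub_le (small_o_ubD (small_o_ubD
  (small_o_ub_sum _ (fun j => curvature_term_dini j tau0))
  (small_o_ubW Y_term)) (small_o_ubW P_term))).
by apply: filterS (nbhs_right_gt tau) => s /ltW ts; apply: dY_increment_le.
Qed.

Definition weighted_dY c s := dY s * expR (c * s).

Lemma weighted_dY_cont c {t} : 0 <= t -> cont_at (weighted_dY c) t.
Proof. by move=> t0; exact: (cvgM (dY_cont t0) (has_deriv_cvg (has_deriv_expR _ c t))). Qed.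

Lemma weighted_dY_dini c tau : 0 <= tau ->
  expR (c * tau) * dY tau * (P tau - gamma + c) <= 0 ->
  small_o_ub tau^'+ tau (fun s => weighted_dY c s - weighted_dY c tau).
Proof.
move=> tau0 lead_le0; have sub := at_right_Rplus tau0.
have exp_right := cont_at_right tau0 (has_deriv_cvg (has_deriv_expR _ c tau)).
have T1 : small_o_ub tau^'+ tau (fun s => expR (c * s) *
    (dY s - dY tau - dY tau * (P tau - gamma) * (s - tau) - susceptible_term tau s)).
  apply: (small_o_ub_bounded_mul (C := `|expR (c * tau)| + 1)) (dY_dini tau0).
  apply: filterS (cvg_near_bounded exp_right) => s.
  by rewrite [`|expR (c * s)|]gtr0_norm ?expR_gt0 // expR_ge0.
have T2 : small_o tau^'+ tau (fun s => (expR (c * s) - expR (c * tau)) *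
    (dY tau * (P tau - gamma) * (s - tau))).
  apply: (small_o_vanishing_mul (C := `|dY tau * (P tau - gamma)|)).
    exact/subr_cvg0.
  by apply: nearW => s; rewrite normrM.
apply: (small_o_ub_le (small_o_ubD (small_o_ubD T1 (small_o_ubW T2))
  (small_o_ubW (small_oZ (dY tau) (small_o_filter_le sub (has_deriv_expR _ c tau)))))).
apply: filterS (nbhs_right_gt tau) => s ts.
rewrite /weighted_dY -subr_le0; set lhs := (X in X <= 0).
have -> : lhs = expR (c * tau) * dY tau * (P tau - gamma + c) * (s - tau)
    + expR (c * s) * susceptible_term tau s by rewrite /lhs; ring.
rewrite -[0]addr0; apply: lerD; first by apply: mulr_le0_ge0 => //; rewrite subr_ge0 ltW.
apply: mulr_ge0_le0; first exact: expR_ge0.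
exact: susceptible_term_le0 (ltW ts).
Qed.

Lemma dY_le0_after {t0 t} : 0 <= t0 -> dY t0 <= 0 -> t0 <= t -> dY t <= 0.
Proof.
move=> t00 dYt0 t0t; rewrite leNgt; apply/negP => dYt.
have t0t' : t0 < t by rewrite lt_neqAle t0t andbT; apply: contraTneq dYt => <-; rewrite -leNgt.
have [c [/andP[t0c ct] dYc dY_gt0]] :=
  last_zero (ltW t0t') dYt0 dYt (continuous_within_itv t00 (fun s sab => dY_cont (le_trans t00 (proj1 (andP sab))))).
have c0 := le_trans t00 t0c.
have : weighted_dY (- P_max) t <= weighted_dY (- P_max) c.
  apply: (dini_nonincreasing (ltW ct)).
    by apply: (continuous_within_itv c0) => s /andP[cs _]; apply/weighted_dY_cont/(le_trans c0 cs).
  move=> tau /andP[ctau taut]; have tau0 := le_trans c0 ctau.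
  apply: weighted_dY_dini => //; apply: mulr_ge0_le0.
    rewrite mulr_ge0 ?expR_ge0 //; move: ctau; rewrite le_eqVlt => /predU1P[<-|ctau].
      by rewrite dYc.
    by apply/ltW/dY_gt0; rewrite ctau ltW.
  by have := P_le tau0; have := gamma_gt0; lra.
rewrite /weighted_dY dYc mul0r => H.
have : 0 < dY t * expR (- P_max * t) by rewrite mulr_gt0 ?expR_gt0.
lra.
Qed.

Lemma xg_i0_dini_of_dY_eq0 {tau t} : 0 <= tau -> tau < t ->
  (forall s, tau <= s <= t -> dY s = 0) ->
  small_o_ub tau^'+ tau (fun s => - xg i0 s - - xg i0 tau).
Proof.
move=> tau0 taut dY0.
have Ytau := Y_gt0 tau0; have slope_tau := slope_i0_gt0 tau0.
pose K := 2 / (Y tau * slope i0 tau).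
have K0 : 0 <= K by rewrite divr_ge0 // ltW // mulr_gt0.
have KK : \forall s \near tau^'+, 0 <= K <= K by apply: nearW => s; rewrite K0 lexx.
apply: (small_o_ub_le (small_o_ub_bounded_mul KK (dY_dini tau0))).
have e0 : 0 < slope i0 tau / 2 by rewrite divr_gt0.
have slope_near : \forall s \near tau^'+,
    `|slope i0 s - slope i0 tau| <= slope i0 tau / 2.
  exact: cvgr_distC_le (cont_at_right tau0 (slope_cont i0 tau0)) _ e0.
near=> s.
have ts : tau < s by near: s; exact: nbhs_right_gt.
have st : s < t by near: s; exact: nbhs_right_lt.
have s0 := le_trans tau0 (ltW ts).
have slope_s : slope i0 tau / 2 <= slope i0 s.
  have : `|slope i0 s - slope i0 tau| <= slope i0 tau / 2 by near: s.
  by rewrite ler_norml => /andP[+ _]; lra.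
rewrite !dY0 ?lexx ?ts ?(ltW ts) ?(ltW taut) ?(ltW st) // !mul0r !subrr sub0r.
have xg_drop : 0 <= xg i0 tau - xg i0 s by rewrite subr_ge0 xg_nonincreasing // ltW.
have negZ : - susceptible_term tau s =
    Y tau * \sum_(j < n) slope j s * (xg j tau - xg j s).
  rewrite /susceptible_term -mulrN -sumrN; congr (_ * _).
  by apply: eq_bigr => j _; ring.
have : Y tau * (slope i0 tau / 2 * (xg i0 tau - xg i0 s)) <= - susceptible_term tau s.
  rewrite negZ (bigD1 i0) //= ler_pM2l // -[leLHS]addr0.
  apply: lerD; first exact: ler_wpM2r.
  apply: sumr_ge0 => j _; apply: mulr_ge0; first exact: slope_ge0.
  by rewrite subr_ge0 xg_nonincreasing // ltW.
have -> : - xg i0 s - - xg i0 tau =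
    K * (Y tau * (slope i0 tau / 2 * (xg i0 tau - xg i0 s))).
  by rewrite /K; field; rewrite !gt_eqF.
by move=> H; rewrite ler_wpM2l.
Unshelve. all: by end_near.
Qed.

Lemma dY_lt0_after {t0 t} : 0 <= t0 -> dY t0 <= 0 -> t0 < t -> dY t < 0.
Proof.
move=> t00 dYt0 t0t; rewrite lt_neqAle (dY_le0_after t00 dYt0 (ltW t0t)) andbT.
apply/eqP => dYt.
have dY0 s : t0 <= s <= t -> dY s = 0.
  move=> /andP[t0s st]; have s0 := le_trans t00 t0s.
  apply/eqP; rewrite eq_le (dY_le0_after t00 dYt0 t0s) /=.
  have : weighted_dY gamma t <= weighted_dY gamma s.
    apply: (dini_nonincreasing st).
      by apply: (continuous_within_itv s0) => r /andP[sr _]; apply/weighted_dY_cont/(le_trans s0 sr).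
    move=> tau /andP[stau _]; have tau0 := le_trans s0 stau.
    apply: weighted_dY_dini => //; rewrite addrNK; apply: mulr_le0_ge0; last exact: P_ge0.
    by apply: mulr_ge0_le0; [exact: expR_ge0 | exact: dY_le0_after t00 dYt0 (le_trans t0s stau)].
  by rewrite /weighted_dY dYt mul0r pmulr_lge0 ?expR_gt0.
have : - xg i0 t <= - xg i0 t0.
  apply: (dini_nonincreasing (u := fun s => - xg i0 s) (ltW t0t)).
    apply: (continuous_within_itv t00) => s /andP[t0s _].
    exact: (cvgN (xg_cont i0 (le_trans t00 t0s))).
  move=> tau /andP[t0tau taut]; apply: xg_i0_dini_of_dY_eq0 (le_trans t00 t0tau) taut _.
  by move=> s /andP[taus st]; apply: dY0; rewrite st (le_trans t0tau taus).
by rewrite lerN2 leNgt xg_i0_decreasing.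
Qed.

Lemma dh0_ge0 j : 0 <= dh j 0.
Proof. exact: (deriv_ge0 (h_deriv j) (h_incr j) (h_concave j) I01_0). Qed.

Lemma h_le_slope0 j z : I01 z -> h j z <= dh j 0 * z.
Proof.
move=> Iz; have := concave_tangent (h_deriv j) (h_concave j) I01_0 Iz.
by rewrite h0 add0r subr0.
Qed.

Definition weighted_mass t := \sum_(j < n) dh j 0 * (x j t + y j t).

Lemma weighted_mass_ge0 {t} : 0 <= t -> 0 <= weighted_mass t.
Proof.
move=> t0; apply: sumr_ge0 => j _; apply: mulr_ge0; first exact: dh0_ge0.
by apply: addr_ge0; apply: I01_ge0; [exact: x_I01 | exact: y_I01].
Qed.

Lemma weighted_mass0_le : weighted_mass 0 <= \sum_(j < n) dh j 0.
Proof.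
apply: ler_sum => j _; rewrite -[leRHS]mulr1 ler_wpM2l ?xy0_le1 //.
exact: dh0_ge0.
Qed.

Lemma weighted_mass_decay {m t} : 0 <= t -> (forall s, 0 <= s -> m <= Y s) ->
  weighted_mass t + gamma * m * t <= weighted_mass 0.
Proof.
move=> t0 mY; rewrite -[leRHS]addr0 -[X in _ <= _ + X](mulr0 (gamma * m)).
apply: (nonincreasing_on_Rplus (u := fun s => weighted_mass s + gamma * m * s)
  (fun s => \sum_(j < n) dh j 0 * (- (xg j s * Y s) + dy j s) + gamma * m * 1))
  => // s.
  move=> s0; apply: has_derivD; last exact/has_derivZ/has_deriv_id.
  apply: has_deriv_sum => j; apply: has_derivZ.
  exact: has_derivD (x_deriv j _ s0) (y_deriv j _ s0).
move=> /andP[s0 _]; rewrite mulr1.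
have -> : \sum_(j < n) dh j 0 * (- (xg j s * Y s) + dy j s) =
    - (gamma * \sum_(j < n) dh j 0 * y j s).
  by rewrite mulr_sumr -sumrN; apply: eq_bigr => j _; rewrite /dy; ring.
have : Y s <= \sum_(j < n) dh j 0 * y j s.
  by apply: ler_sum => j _; apply/h_le_slope0/y_I01.
move=> /(ler_wpM2l (ltW gamma_gt0)); have := ler_wpM2l (ltW gamma_gt0) (mY s s0).
lra.
Qed.

Lemma dY_eventually_le0 : exists2 t, 0 <= t & dY t <= 0.
Proof.
case: (pselect (exists2 t, 0 <= t & dY t <= 0)) => // no_t; exfalso.
have Y0_le t : 0 <= t -> Y 0 <= Y t.
  move=> t0; rewrite -lerN2.
  apply: (nonincreasing_on_Rplus (u := fun s => - Y s) (fun s => - dY s)) => // s.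
    by move=> s0; apply/has_derivN/Y_deriv.
  move=> /andP[s0 _]; rewrite oppr_le0 ltW // ltNge; apply/negP => dYs.
  by apply: no_t; exists s.
have gY0 : 0 < gamma * Y 0 by rewrite mulr_gt0 ?Y_gt0.
have D0 := le_trans (weighted_mass_ge0 (le_refl 0)) weighted_mass0_le.
pose T := (\sum_(j < n) dh j 0) / (gamma * Y 0) + 1.
have T0 : 0 <= T by apply: addr_ge0 => //; apply: divr_ge0 => //; exact: ltW.
have gYT : gamma * Y 0 * T = \sum_(j < n) dh j 0 + gamma * Y 0.
  by rewrite /T mulrDr mulr1 [gamma * Y 0 * _]mulrC divfK // gt_eqF.
have := weighted_mass_decay T0 Y0_le; have := weighted_mass_ge0 T0.
have := weighted_mass0_le; move: gYT gY0; clearbody T; lra.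
Qed.

Lemma Y_decreasing_after {t0} : 0 <= t0 -> dY t0 <= 0 ->
  forall s t, t0 <= s -> s < t -> Y t < Y s.
Proof.
move=> t00 dYt0 s t t0s st; have s0 := le_trans t00 t0s.
apply: (decreasing_on_Rplus dY s0 st (fun r _ => Y_deriv _)) => // r /andP[sr rt].
  exact: dY_le0_after t00 dYt0 (le_trans t0s sr).
exact: dY_lt0_after t00 dYt0 (le_lt_trans t0s sr).
Qed.

Lemma Y_rise_then_fall d : has_deriv Rplus_half Y 0 d ->
  (d <= 0 -> forall s t, 0 <= s -> s < t -> Y t < Y s) /\
  (0 < d -> exists th, 0 < th /\
     (forall s t, 0 <= s -> s < t -> t <= th -> Y s < Y t) /\
     (forall s t, th <= s -> s < t -> Y t < Y s)).
Proof.
move=> Yd; have -> : d = dY 0.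
  exact: has_deriv_unique (fun s => @ltW _ _ 0 s) Yd (Y_deriv (le_refl 0)).
split=> [dY0|dY0]; first exact: Y_decreasing_after (le_refl 0) dY0.
have [t1 t10 dYt1] := dY_eventually_le0.
have t1_lt : t1 < t1 + 1 by rewrite ltrDl.
have ndY0 : - dY 0 <= 0 by rewrite oppr_le0 ltW.
have ndYb : 0 < - dY (t1 + 1).
  by rewrite oppr_gt0; exact: dY_lt0_after t10 dYt1 t1_lt.
have ndY_cont : {within `[0, t1 + 1], continuous (fun s => - dY s)}.
  by apply: (continuous_within_itv (le_refl 0)) => s /andP[s0 _]; exact: (cvgN (dY_cont s0)).
have [th [/andP[th0 _] /eqP] ] := last_zero (addr_ge0 t10 ler01) ndY0 ndYb ndY_cont.
rewrite oppr_eq0 => /eqP dYth _.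
have dY_pos s : 0 <= s < th -> 0 < dY s.
  move=> /andP[s0 sth]; rewrite ltNge; apply/negP => dYs.
  by have := dY_lt0_after s0 dYs sth; rewrite dYth ltxx.
have th_pos : 0 < th.
  rewrite lt_neqAle th0 andbT; apply: contraTneq dY0 => th_eq.
  by move: dYth; rewrite th_eq => ->; rewrite ltxx.
exists th; split => //; split.
  move=> s t s0 st tth; rewrite -ltrN2.
  apply: (decreasing_on_Rplus (u := fun r => - Y r) (fun r => - dY r) s0 st).
  - by move=> r r0; apply/has_derivN/Y_deriv.
  - move=> r /andP[sr rt]; rewrite oppr_le0 ltW // dY_pos //.
    by rewrite (le_trans s0 sr) (lt_le_trans rt tth).
  - move=> r /andP[sr rt]; rewrite oppr_lt0 dY_pos //.
    by rewrite (le_trans s0 (ltW sr)) (lt_le_trans rt tth).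
by move=> s t ths st; apply: Y_decreasing_after th0 _ s t ths st; rewrite dYth.
Qed.

End sir_network.

Section C1_on01.
Context {R : realType}.
Implicit Types (u : R -> R).

Lemma C1_on01_deriv {u} : C1_on01 u -> exists du : R -> R,
  (forall z, I01 z -> has_deriv I01 u z (du z)) /\
  (forall z, I01 z -> du @ within I01 (nbhs z) --> du z).
Proof.
move=> [du [du_cont u_deriv]]; exists du; split => z Iz.
  exact: has_deriv_of_deriv_within (u_deriv z Iz).
exact: (subspace_continuousP _ _).1 du_cont z Iz.
Qed.

Lemma C1_on01_cvg {u z} : C1_on01 u -> I01 z -> u @ within I01 (nbhs z) --> u z.
Proof. by move=> /C1_on01_deriv[du [u_deriv _]] /u_deriv/has_deriv_cvg. Qed.

Lemma C1_on01_mulr_id {u} : C1_on01 u -> exists dh : R -> R,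
  (forall z, I01 z -> has_deriv I01 (fun z => u z * z) z (dh z)) /\
  (forall z, I01 z -> dh @ within I01 (nbhs z) --> dh z).
Proof.
move=> /C1_on01_deriv[du [u_deriv du_cont]].
exists (fun z => du z * z + u z); split => z Iz.
  by have := has_derivM (u_deriv z Iz) (has_deriv_id I01 z); rewrite mulr1.
exact: (cvgD (cvgM (du_cont z Iz) (cvg_within _)) (has_deriv_cvg (u_deriv z Iz))).
Qed.

Lemma C1_on01_bounded {n} {g : 'I_n -> R -> R} : (forall i, C1_on01 (g i)) ->
  exists G, forall i z, I01 z -> g i z <= G.
Proof.
move=> g_C1; have g_max i : exists M : R, forall z, I01 z -> g i z <= M.
  have : {within `[0, 1], continuous (g i)}.
    apply/subspace_continuousP => z; rewrite /= in_itv /= => Iz.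
    apply: cvg_trans (C1_on01_cvg (g_C1 i) Iz); apply: cvg_app.
    by apply: within_subset => r; rewrite /= in_itv.
  move=> /(EVT_max ler01)[c _ c_max]; exists (g i c) => z Iz.
  by apply: c_max; rewrite in_itv.
have [M g_le] := choice g_max.
exists (\sum_i `|M i|) => i z Iz; apply: le_trans (g_le i z Iz) _.
rewrite (le_trans (ler_norm _)) // (bigD1 i) //= lerDl.
by apply: sumr_ge0 => k _.
Qed.

End C1_on01.

Theorem theorem2 (R : realType) (n : nat) (gamma : R)
  (g f : 'I_n -> R -> R) (x y : 'I_n -> R -> R) :
  (0 < n)%N -> 0 < gamma ->
  (forall i, C1_on01 (g i)) -> (forall j, C1_on01 (f j)) ->
  (forall i z, I01 z -> 0 <= g i z) -> (forall j z, I01 z -> 0 <= f j z) ->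
  (forall xx yy : 'I_n -> R, inS xx yy ->
     forall i, 0 < g i (xx i) /\ 0 < f i (yy i)) ->
  (forall i, strictly_incr_on01 (fun z => z * g i z)) ->
  (forall j, strictly_incr_on01 (fun z => f j z * z)) ->
  (forall j, concave_on01 (fun z => f j z * z)) ->
  (* the solution stays in the domain [0,1]^{2n} of the vector field *)
  (forall i t, 0 <= t -> I01 (x i t) /\ I01 (y i t)) ->
  (* the ODE on [0, +oo) (right derivative at t = 0) *)
  (forall i t, 0 <= t ->
     deriv_within Rplus_half (x i) t
       (- (x i t * g i (x i t) * ybar f y t))) ->
  (forall i t, 0 <= t ->
     deriv_within Rplus_half (y i) t
       (x i t * g i (x i t) * ybar f y t - gamma * y i t)) ->
  (* initial condition *)
  inS (fun i => x i 0) (fun i => y i 0) ->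
  vlne (fun _ => 0) (fun i => x i 0) ->
  vle (fun i => x i 0) (fun i => 1 - y i 0) ->
  vlne (fun i => 1 - y i 0) (fun _ => 1) ->
  forall d, deriv_within Rplus_half (ybar f y) 0 d ->
  (d <= 0 -> forall s t, 0 <= s -> s < t -> ybar f y t < ybar f y s) /\
  (0 < d -> exists th, 0 < th /\
     (forall s t, 0 <= s -> s < t -> t <= th -> ybar f y s < ybar f y t) /\
     (forall s t, th <= s -> s < t -> ybar f y t < ybar f y s)).
Proof.
move=> _ gamma0 g_C1 f_C1 _ _ gf_pos xg_incr h_incr h_concave sol x_d y_d x0y0
  [_ [i0 x_i0]] _ [_ [j1 y_j1]] d Yd.
have [dh dh_spec] := choice (fun j => C1_on01_mulr_id (f_C1 j)).
have [G g_le] := C1_on01_bounded g_C1.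
have g_gt0 i z : I01 z -> 0 < g i z.
  move=> /andP[z0 z1]; apply: (proj1 (gf_pos (fun=> z) (fun=> 0) _ i)) => k.
  by rewrite z0 z1 lexx ler01 addr0.
apply: (@Y_rise_then_fall R n gamma G g (fun j z => f j z * z) dh x y gamma0
  (fun j => proj1 (dh_spec j)) (fun j => proj2 (dh_spec j)) h_incr h_concave
  (fun j => mulr0 _) (fun i z => C1_on01_cvg (g_C1 i)) g_gt0 g_le xg_incr sol
  (fun i t t0 => has_deriv_of_deriv_within (x_d i t t0))
  (fun i t t0 => has_deriv_of_deriv_within (y_d i t t0)) _ i0 j1 x_i0 _ d
  (has_deriv_of_deriv_within Yd)).
- by move=> i; have [_ _ ->] := x0y0 i.
- by move: y_j1 => /=; lra.
Qed.
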